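(* Let $Q\subset\mathbb R^2$ be an $\mathbb R$-unimodular copy of the unit square $[0,1]^2$, and let $P\subset\mathbb R^2$ be a parallelogram such that the relative interior of each of the four facets of $P$ contains exactly one vertex of $Q$ (distinct facets containing distinct vertices). Then $P$ is $\mathbb R$-$\Delta_2$-free and inclusion-maximal among $\mathbb R$-$\Delta_2$-free convex sets.
   Context: $\Delta_2=\mathrm{conv}(\mathbf 0,e_1,e_2)$. An $\mathbb R$-unimodular copy of $X$ is $T(X)$ where $T(x)=Mx+b$, $M\in\mathrm{GL}_2(\mathbb Z)$, $b\in\mathbb R^2$. A convex set is $\mathbb R$-$\Delta_2$-free if its relative interior contains no $\mathbb R$-unimodular copy of $\Delta_2$. *)

From mathcomp Require Import all_boot all_order all_algebra.
From mathcomp Require Import classical_sets reals.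
Set Implicit Arguments. Unset Strict Implicit. Unset Printing Implicit Defensive.
Import Order.TTheory GRing.Theory Num.Theory.
Local Open Scope ring_scope.
Local Open Scope classical_set_scope.

Section Defs.
Variable R : realType.

Definition pt := (R * R)%type.
Definition padd (p q : pt) : pt := (p.1 + q.1, p.2 + q.2).
Definition pscale (t : R) (p : pt) : pt := (t * p.1, t * p.2).
Definition pcomb (t : R) (p q : pt) : pt := padd (pscale (1 - t) p) (pscale t q).

Definition convex_set (K : set pt) : Prop :=
  forall p q t, K p -> K q -> 0 <= t <= 1 -> K (pcomb t p q).

Definition affine_set (A : set pt) : Prop :=
  forall p q t, A p -> A q -> A (pcomb t p q).

Definition aff_hull (K : set pt) : set pt :=
  fun x => forall A, affine_set A -> K `<=` A -> A x.

Definition relint (K : set pt) : set pt :=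
  fun x => K x /\ exists e : R, 0 < e /\
    forall y, aff_hull K y -> (y.1 - x.1) ^+ 2 + (y.2 - x.2) ^+ 2 < e ^+ 2 -> K y.

Definition umap (m11 m12 m21 m22 : int) (b : pt) (x : pt) : pt :=
  (m11%:~R * x.1 + m12%:~R * x.2 + b.1, m21%:~R * x.1 + m22%:~R * x.2 + b.2).

Definition unimodular (m11 m12 m21 m22 : int) : Prop :=
  m11 * m22 - m12 * m21 = 1 \/ m11 * m22 - m12 * m21 = -1.

Definition Delta2 : set pt := fun x => 0 <= x.1 /\ 0 <= x.2 /\ x.1 + x.2 <= 1.

Definition R_Delta2_free (K : set pt) : Prop :=
  convex_set K /\
  ~ (exists (m11 m12 m21 m22 : int) (b : pt),
        unimodular m11 m12 m21 m22 /\ umap m11 m12 m21 m22 b @` Delta2 `<=` relint K).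

Definition max_R_Delta2_free (K : set pt) : Prop :=
  R_Delta2_free K /\ forall K', R_Delta2_free K' -> K `<=` K' -> K' = K.

Definition parallelogram (v a b : pt) : set pt :=
  fun x => exists s t : R, 0 <= s <= 1 /\ 0 <= t <= 1 /\
    x = padd v (padd (pscale s a) (pscale t b)).

Definition pcorner (v a b : pt) (i : nat) : pt :=
  match i with
  | 0 => v
  | 1 => padd v a
  | 2 => padd v (padd a b)
  | _ => padd v b
  end.

(* relative interior of the segment [p,q] (p <> q): the open segment *)
Definition open_segment (p q : pt) : set pt :=
  fun x => exists t : R, 0 < t < 1 /\ x = pcomb t p q.

Definition facet_relint (v a b : pt) (i : 'I_4) : set pt :=
  open_segment (pcorner v a b i) (pcorner v a b ((i.+1) %% 4)).

Definition square_corner (j : nat) : pt :=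
  match j with
  | 0 => (0, 0)
  | 1 => (1, 0)
  | 2 => (1, 1)
  | _ => (0, 1)
  end.

End Defs.

From mathcomp Require Import all_boot all_order all_algebra.
From mathcomp Require Import classical_sets reals.
From mathcomp Require Import lra ring zify.
Set Implicit Arguments. Unset Strict Implicit. Unset Printing Implicit Defensive.
Import Order.TTheory GRing.Theory Num.Theory.
Local Open Scope ring_scope.
Local Open Scope classical_set_scope.

(* In the affine coordinates (s, t) of the frame (v; a, b), P is the unit square
   and the vertices of Q lie one in each open side.  Hence the coordinate vectors
   e1, e2 of two adjacent edges of Q have, in one coordinate, equal signs and sum
   +-1, and in the other, opposite signs and difference +-1; so k e1 + l e2 has a
   coordinate of absolute value at least 1 whenever k, l are nonzero integers.
   An edge of a triangle in the open square has both coordinates in (-1, 1), so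
   each edge of a unimodular triangle inside P would be an integer multiple of e1
   or of e2, which is incompatible with determinant +-1: P is R-Delta_2-free.
   If a convex K contains P and a point x beyond the side containing the vertex c
   of Q, let d, c', d' be the next vertices of Q.  The triangle (c, d, c') is
   unimodular, and its translate by eta (c - d) for a small eta > 0 has its vertices
   in the interior of K: c + eta (c - d) lies strictly between x and an interior
   point of P, while the two other vertices lie on open segments joining distinct
   sides of P.  So P is maximal. *)

Section UnitSquare.
Variable R : realType.
Implicit Types (p c d x z : pt R) (i j : nat).

Definition open_square p : Prop := 0 < p.1 < 1 /\ 0 < p.2 < 1.

(* Sides of [0,1]^2 in the order of [pcorner]: bottom, right, top, left. *)
Definition on_facet i p : Prop :=
  match i with
  | 0 => p.2 = 0 /\ 0 < p.1 < 1
  | 1 => p.1 = 1 /\ 0 < p.2 < 1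
  | 2 => p.2 = 1 /\ 0 < p.1 < 1
  | _ => p.1 = 0 /\ 0 < p.2 < 1
  end.

Definition beyond_facet i p : Prop :=
  match i with 0 => p.2 < 0 | 1 => 1 < p.1 | 2 => 1 < p.2 | _ => p.1 < 0 end.

(* The quarter turn of the square mapping side [i] to side [i - 1 (mod 4)]. *)
Definition square_rot p : pt R := (p.2, 1 - p.1).

Lemma square_rot_pcomb r p c :
  square_rot (pcomb r p c) = pcomb r (square_rot p) (square_rot c).
Proof. by rewrite /square_rot /pcomb /padd /pscale /=; congr pair; ring. Qed.

Lemma square_rot_inj : injective square_rot.
Proof.
move=> [p1 p2] [c1 c2] [e2 e1]; congr pair => //.
by rewrite -[p1]opprK -[c1]opprK; congr (- _); lra.
Qed.

Lemma on_facet_rot i p :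
  (i < 4)%N -> on_facet i p -> on_facet ((i + 3) %% 4)%N (square_rot p).
Proof.
by case: i => [|[|[|[|//]]]] _ [e /andP[? ?]]; rewrite /square_rot /= ?e;
  split; rewrite ?subrr ?subr0 //; apply/andP; split; lra.
Qed.

Lemma beyond_facet_rot i p :
  (i < 4)%N -> beyond_facet i p -> beyond_facet ((i + 3) %% 4)%N (square_rot p).
Proof. by case: i => [|[|[|[|//]]]] _ /=; lra. Qed.

(* [c + eta (c - d)], just beyond [c] on the line [d c], lies strictly between a point
   of the open square and [x]. *)
Definition extension_in_hull c d x : Prop :=
  exists (eta mu : R) z, [/\ 0 < eta < 1, 0 <= mu < 1, open_square z &
    pcomb (- eta) c d = pcomb mu z x].

Lemma extension_in_hull_rot c d x :
  extension_in_hull (square_rot c) (square_rot d) (square_rot x) -> extension_in_hull c d x.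
Proof.
case=> eta [mu [z [eta01 mu01 [z1 z2] ext]]].
exists eta, mu, (1 - z.2, z.1); split => //.
  by move: z1 z2 => /andP[? ?] /andP[? ?]; split; apply/andP; split => /=; lra.
apply: square_rot_inj; rewrite !square_rot_pcomb ext; congr pcomb.
by rewrite /square_rot /=; case: (z) => ? ? /=; congr pair; ring.
Qed.

Lemma extension_in_hull_bottom c d x :
  on_facet 0 c -> 0 < d.2 <= 1 -> 0 <= d.1 <= 1 -> x.2 < 0 -> extension_in_hull c d x.
Proof.
move=> [c2_eq0 /andP[c1_gt0 c1_lt1]] /andP[d2_gt0 d2_le1] /andP[d1_ge0 d1_le1] x2_lt0.
set h := - x.2; have h_gt0 : 0 < h by rewrite /h; lra.
set m := Num.min c.1 (1 - c.1).
have m_gt0 : 0 < m by rewrite /m lt_min; apply/andP; split; lra.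
have [m_le_c1 m_le_1c1] : m <= c.1 /\ m <= 1 - c.1 by rewrite /m !ge_min !lexx /= orbT.
set X := `|x.1| + 1.
have X_ge1 : 1 <= X by rewrite /X; have := normr_ge0 x.1; lra.
have /andP[x1_ge x1_le] : - (X - 1) <= x.1 <= X - 1 by rewrite /X addrK -ler_norml.
(* [eta] and [mu] are chosen so that [eta + mu * X <= m / 2] *)
set eta := m * h / (2 * (h + 2 * X)).
have eta_gt0 : 0 < eta by apply: divr_gt0; [apply: mulr_gt0 | lra].
have etaE : eta * h + 2 * eta * X = m * h / 2 by rewrite /eta; field; lra.
set mu := 2 * eta * d.2 / h.
have muE : mu * h = 2 * eta * d.2 by rewrite /mu; field; lra.
have mu_ge0 : 0 <= mu by rewrite /mu; apply: divr_ge0; nra.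
have muX : eta + mu * X <= m / 2.
  have : (eta + mu * X - m / 2) * h <= 0.
    have -> : (eta + mu * X - m / 2) * h = eta * h + X * (mu * h) - m * h / 2 by ring.
    have : 0 <= eta * X by apply: mulr_ge0; lra.
    rewrite muE; nra.
  by nra.
have mu_lt1 : 0 < 1 - mu by nra.
exists eta, mu, (((1 + eta) * c.1 - eta * d.1 - mu * x.1) / (1 - mu), eta * d.2 / (1 - mu)).
split; [by apply/andP; split; nra | by apply/andP; split; nra | split => /= | ].
- by apply/andP; split; [apply: divr_gt0 | rewrite ltr_pdivrMr // mul1r]; nra.
- by apply/andP; split; [apply: divr_gt0 | rewrite ltr_pdivrMr // mul1r]; nra.
rewrite /pcomb /padd /pscale /= c2_eq0.
have -> : mu * x.2 = - (2 * eta * d.2) by rewrite -muE /h; ring.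
by congr pair; field; lra.
Qed.

Lemma extension_in_hull_facet i j c d x : (i < 4)%N -> (j < 4)%N -> j != i ->
  on_facet i c -> on_facet j d -> beyond_facet i x -> extension_in_hull c d x.
Proof.
elim: i j c d x => [|i IH] j c d x lt_i4 lt_j4 neq_ji on_c on_d beyond_x.
  have [d2_01 d1_01] : 0 < d.2 <= 1 /\ 0 <= d.1 <= 1.
    by case: j lt_j4 neq_ji on_d => [|[|[|[|//]]]] //= _ _ [? /andP[? ?]];
      split; apply/andP; split; lra.
  exact: extension_in_hull_bottom.
apply: extension_in_hull_rot; apply: (IH ((j + 3) %% 4)%N).
- exact: ltnW.
- by rewrite ltn_pmod.
- by case: i {IH on_c beyond_x} lt_i4 neq_ji => [|[|[|//]]] _;
    case: j {on_d} lt_j4 => [|[|[|[|//]]]].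
- by have := on_facet_rot lt_i4 on_c; rewrite addSn -addnS modnDr modn_small // ltnW.
- exact: on_facet_rot.
- by have := beyond_facet_rot lt_i4 beyond_x; rewrite addSn -addnS modnDr modn_small // ltnW.
Qed.

Lemma open_square_pcomb_facets i j c d (r : R) : (i < 4)%N -> (j < 4)%N -> i != j ->
  on_facet i c -> on_facet j d -> 0 < r < 1 -> open_square (pcomb r c d).
Proof.
case: i => [|[|[|[|//]]]] _; case: j => [|[|[|[|//]]]] _ //= _
  [ec /andP[? ?]] [ed /andP[? ?]] /andP[? ?];
  rewrite /open_square /pcomb /padd /pscale /= ?ec ?ed; split; apply/andP; split; nra.
Qed.

Definition same_sign_unit (u w : R) : Prop :=
  (0 < u /\ 0 < w /\ u + w = 1) \/ (u < 0 /\ w < 0 /\ u + w = -1).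

(* The sign pattern of the coordinates of two adjacent edge vectors of a parallelogram
   inscribed in the unit square with one vertex in each open side. *)
Definition inscribed_edges (e1 e2 : pt R) : Prop :=
  same_sign_unit e1.2 e2.2 /\ same_sign_unit e1.1 (- e2.1) \/
  same_sign_unit e1.1 e2.1 /\ same_sign_unit e1.2 (- e2.2).

Lemma same_sign_unit_gap (u w k l : R) : same_sign_unit u w ->
  1 <= `|k| -> 1 <= `|l| -> 0 < k * l -> 1 <= `|k * u + l * w|.
Proof.
rewrite !ler_normr => uw /orP[k_ge1|k_le] /orP[l_ge1|l_le] kl; apply/orP.
- by case: uw => [[? [? ?]]|[? [? ?]]]; [left | right]; nra.
- by exfalso; nra.
- by exfalso; nra.
- by case: uw => [[? [? ?]]|[? [? ?]]]; [right | left]; nra.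
Qed.

Lemma inscribed_edges_gap e1 e2 (k l : R) : inscribed_edges e1 e2 ->
  1 <= `|k| -> 1 <= `|l| -> 1 <= `|k * e1.1 + l * e2.1| \/ 1 <= `|k * e1.2 + l * e2.2|.
Proof.
move=> e12 k_ge1 l_ge1.
have Nl_ge1 : 1 <= `|- l| by rewrite normrN.
have [kl_gt0|kl_le0] := ltP 0 (k * l).
  case: e12 => [[e2_same _]|[e1_same _]]; [right | left]; exact: same_sign_unit_gap.
have kNl_gt0 : 0 < k * - l.
  rewrite mulrN oppr_gt0 lt_neqAle kl_le0 andbT mulf_neq0 //.
    by apply: contraTneq k_ge1 => ->; rewrite normr0 ler10.
  by apply: contraTneq l_ge1 => ->; rewrite normr0 ler10.
have flip (u w : R) : k * u + l * w = k * u + - l * - w by ring.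
case: e12 => [[_ e1_opp]|[_ e2_opp]]; [left | right]; rewrite flip; exact: same_sign_unit_gap.
Qed.

Lemma inscribed_edges_int_axis e1 e2 (k l : int) : inscribed_edges e1 e2 ->
  `|k%:~R * e1.1 + l%:~R * e2.1| < 1 -> `|k%:~R * e1.2 + l%:~R * e2.2| < 1 -> k = 0 \/ l = 0.
Proof.
move=> e12 small1 small2.
have [->|k_neq0] := eqVneq k 0; first by left.
have [->|l_neq0] := eqVneq l 0; first by right.
have norm_ge1 (n : int) : n != 0 -> 1 <= `|n%:~R : R|.
  by move=> n_neq0; apply: norm_intr_ge1; rewrite ?intr_int ?intr_eq0.
by exfalso; case: (inscribed_edges_gap e12 (norm_ge1 _ k_neq0) (norm_ge1 _ l_neq0)); lra.
Qed.

Lemma inscribed_edges_of_facets p e1 e2 (j0 j1 j2 j3 : nat) :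
  (j0 < 4)%N -> (j1 < 4)%N -> (j2 < 4)%N -> (j3 < 4)%N -> uniq [:: j0; j1; j2; j3] ->
  on_facet 0 (pcorner p e1 e2 j0) -> on_facet 1 (pcorner p e1 e2 j1) ->
  on_facet 2 (pcorner p e1 e2 j2) -> on_facet 3 (pcorner p e1 e2 j3) ->
  inscribed_edges e1 e2.
Proof.
rewrite /inscribed_edges /same_sign_unit.
(* of the 24 assignments of vertices to sides, the 8 cyclic ones give a sign pattern,
   the others are inconsistent *)
case: j0 => [|[|[|[|//]]]] _; case: j1 => [|[|[|[|//]]]] _;
case: j2 => [|[|[|[|//]]]] _; case: j3 => [|[|[|[|//]]]] _ //= _;
move=> [? /andP[? ?]] [? /andP[? ?]] [? /andP[? ?]] [? /andP[? ?]];
first [ exfalso; lra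
      | left; split; [left | left]; lra
      | left; split; [left | right]; lra
      | left; split; [right | left]; lra
      | left; split; [right | right]; lra
      | right; split; [left | left]; lra
      | right; split; [left | right]; lra
      | right; split; [right | left]; lra
      | right; split; [right | right]; lra ].
Qed.

End UnitSquare.

Section BoxNeighbourhoods.
Variable R : realType.
Implicit Types (K : set (pt R)) (x y z : pt R) (e : R).

(* Square neighbourhoods are easier to move around than the Euclidean balls of [relint]. *)
Definition box_nbhd K y e : Prop :=
  forall d : pt R, `|d.1| <= e -> `|d.2| <= e -> K (padd y d).

Lemma box_nbhd_le K y e e' : e' <= e -> box_nbhd K y e -> box_nbhd K y e'.
Proof. by move=> le_e Ke d d1 d2; apply: Ke; apply: le_trans le_e. Qed.

Lemma box_nbhd_sub K K' y e : K `<=` K' -> box_nbhd K y e -> box_nbhd K' y e.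
Proof. by move=> sKK' Ke d d1 d2; apply/sKK'/Ke. Qed.

Lemma relint_box_nbhd K y e : 0 < e -> box_nbhd K y e -> relint K y.
Proof.
move=> e_gt0 Ke; split.
  have -> : y = padd y (0, 0) by rewrite /padd /= !addr0; case: (y).
  by apply: Ke; rewrite /= normr0 ltW.
exists e; split => // z _; rewrite !expr2 => yz.
have coord_le (u w : R) : u * u + w * w < e * e -> `|u| <= e.
  by move=> uw; rewrite ler_norml; apply/andP; split; nra.
have -> : z = padd y (z.1 - y.1, z.2 - y.2).
  by case: z yz => z1 z2 _; rewrite /padd /=; congr pair; ring.
by apply: Ke => /=; [apply: (coord_le _ (z.2 - y.2)) | apply: (coord_le _ (z.1 - y.1))]; lra.
Qed.

Lemma convex3 K (p0 p1 p2 : pt R) (x1 x2 : R) :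
  convex_set K -> K p0 -> K p1 -> K p2 -> 0 <= x1 -> 0 <= x2 -> x1 + x2 <= 1 ->
  K (p0.1 + x1 * (p1.1 - p0.1) + x2 * (p2.1 - p0.1),
     p0.2 + x1 * (p1.2 - p0.2) + x2 * (p2.2 - p0.2)).
Proof.
move=> convK Kp0 Kp1 Kp2 x1_ge0 x2_ge0 x12_le1.
have [x12_eq0|x12_neq0] := eqVneq (x1 + x2) 0.
  have [-> ->] : x1 = 0 /\ x2 = 0 by split; lra.
  by rewrite !mul0r !addr0; case: p0 Kp0.
have x12_gt0 : 0 < x1 + x2 by rewrite lt_def x12_neq0 /=; lra.
(* first the point of [p1 p2] in the direction of the target, then towards [p0] *)
have Kp12 : K (pcomb (x2 / (x1 + x2)) p1 p2).
  apply: convK => //; apply/andP; split; first by apply: divr_ge0; lra.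
  by rewrite ler_pdivrMr // mul1r; lra.
have := convK _ _ (x1 + x2) Kp0 Kp12; rewrite /pcomb /padd /pscale /=.
have comb (u w y : R) : (1 - (x1 + x2)) * u + (x1 + x2) *
    ((1 - x2 / (x1 + x2)) * w + x2 / (x1 + x2) * y) = u + x1 * (w - u) + x2 * (y - u).
  by field.
by rewrite !comb; apply; apply/andP; split; lra.
Qed.

Lemma box_nbhd_convex3 K (p0 p1 p2 : pt R) (x1 x2 : R) e :
  convex_set K -> box_nbhd K p0 e -> box_nbhd K p1 e -> box_nbhd K p2 e ->
  0 <= x1 -> 0 <= x2 -> x1 + x2 <= 1 ->
  box_nbhd K (p0.1 + x1 * (p1.1 - p0.1) + x2 * (p2.1 - p0.1),
              p0.2 + x1 * (p1.2 - p0.2) + x2 * (p2.2 - p0.2)) e.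
Proof.
move=> convK Kp0 Kp1 Kp2 x1_ge0 x2_ge0 x12_le1 d d1 d2.
have := convex3 convK (Kp0 d d1 d2) (Kp1 d d1 d2) (Kp2 d d1 d2) x1_ge0 x2_ge0 x12_le1.
rewrite /padd /=.
have shift (u w y du : R) : u + du + x1 * (w + du - (u + du)) + x2 * (y + du - (u + du))
  = u + x1 * (w - u) + x2 * (y - u) + du by ring.
by rewrite !shift.
Qed.

Lemma box_nbhd_pcomb K z x e (mu : R) :
  convex_set K -> box_nbhd K z e -> K x -> 0 <= mu < 1 ->
  box_nbhd K (pcomb mu z x) ((1 - mu) * e).
Proof.
move=> convK Kz Kx /andP[mu_ge0 mu_lt1] d d1 d2.
have mu_lt1' : 0 < 1 - mu by lra.
have := convK _ _ mu (Kz (d.1 / (1 - mu), d.2 / (1 - mu)) _ _) Kx.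
rewrite /pcomb /padd /pscale /=.
have rescale (u w du : R) :
    (1 - mu) * (u + du / (1 - mu)) + mu * w = (1 - mu) * u + mu * w + du.
  by field; lra.
rewrite !rescale; apply; last by apply/andP; split; lra.
  by rewrite /= normrM normfV (gtr0_norm mu_lt1') ler_pdivrMr // mulrC.
by rewrite /= normrM normfV (gtr0_norm mu_lt1') ler_pdivrMr // mulrC.
Qed.

Lemma exists_small_scale e (d : pt R) : 0 < e ->
  exists2 r : R, 0 < r & (r * d.1) ^+ 2 + (r * d.2) ^+ 2 < e ^+ 2.
Proof.
move=> e_gt0; set N := `|d.1| + `|d.2| + 1.
have N_gt0 : 0 < N by rewrite /N; have := normr_ge0 d.1; have := normr_ge0 d.2; lra.
have r_gt0 : 0 < e / (2 * N) by apply: divr_gt0 => //; lra.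
exists (e / (2 * N)) => //.
have small (u : R) : `|u| <= N -> (e / (2 * N) * u) ^+ 2 <= e ^+ 2 / 4.
  move=> uN; have : `|e / (2 * N) * u| <= e / 2.
    rewrite normrM (gtr0_norm r_gt0); apply: le_trans (ler_wpM2l (ltW r_gt0) uN) _.
    by rewrite le_eqVlt; apply/orP; left; apply/eqP; field; lra.
  by rewrite ler_norml => /andP[? ?]; rewrite expr2; nra.
have sd1 : (e / (2 * N) * d.1) ^+ 2 <= e ^+ 2 / 4.
  by apply: small; rewrite /N; have := normr_ge0 d.2; lra.
have sd2 : (e / (2 * N) * d.2) ^+ 2 <= e ^+ 2 / 4.
  by apply: small; rewrite /N; have := normr_ge0 d.1; lra.
have : 0 < e ^+ 2 by apply: exprn_gt0.
lra.
Qed.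

Definition lattice_triangle (p0 p1 p2 : pt R) : Prop :=
  exists n11 n12 n21 n22 : int, unimodular n11 n12 n21 n22 /\
    p1 = padd p0 (n11%:~R, n21%:~R) /\ p2 = padd p0 (n12%:~R, n22%:~R).

Lemma lattice_triangle_padd (p0 p1 p2 d : pt R) :
  lattice_triangle p0 p1 p2 -> lattice_triangle (padd p0 d) (padd p1 d) (padd p2 d).
Proof.
move=> [n11 [n12 [n21 [n22 [unimod_n [-> ->]]]]]].
by exists n11, n12, n21, n22; split => //; rewrite /padd /=; split; congr pair; ring.
Qed.

Lemma lattice_triangle_not_free K (p0 p1 p2 : pt R) e :
  convex_set K -> 0 < e -> box_nbhd K p0 e -> box_nbhd K p1 e -> box_nbhd K p2 e ->
  lattice_triangle p0 p1 p2 -> ~ R_Delta2_free K.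
Proof.
move=> convK e_gt0 Kp0 Kp1 Kp2 [n11 [n12 [n21 [n22 [unimod_n [p1E p2E]]]]]] [_]; apply.
exists n11, n12, n21, n22, p0; split => // _ [z [z1_ge0 [z2_ge0 z12_le1]] <-].
apply: (relint_box_nbhd e_gt0).
have -> : umap n11 n12 n21 n22 p0 z =
    (p0.1 + z.1 * (p1.1 - p0.1) + z.2 * (p2.1 - p0.1),
     p0.2 + z.1 * (p1.2 - p0.2) + z.2 * (p2.2 - p0.2)).
  by rewrite p1E p2E /umap /padd /=; congr pair; ring.
exact: box_nbhd_convex3.
Qed.

End BoxNeighbourhoods.

Section FrameCoordinates.
Variables (R : realType) (v a b : pt R).
Hypothesis hab : a.1 * b.2 - a.2 * b.1 != 0.
Implicit Types (x y d : pt R) (s t : R).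

Definition slin d : R := (d.1 * b.2 - d.2 * b.1) / (a.1 * b.2 - a.2 * b.1).
Definition tlin d : R := (a.1 * d.2 - a.2 * d.1) / (a.1 * b.2 - a.2 * b.1).
Definition scoord x : R := slin (x.1 - v.1, x.2 - v.2).
Definition tcoord x : R := tlin (x.1 - v.1, x.2 - v.2).
Definition frame s t : pt R := padd v (padd (pscale s a) (pscale t b)).
Definition fcoord x : pt R := (scoord x, tcoord x).
Definition lin d : pt R := (slin d, tlin d).

Ltac coord_field := rewrite /scoord /tcoord /slin /tlin /frame /pcomb /padd /pscale /=; field.

Lemma scoord_frame s t : scoord (frame s t) = s. Proof. by coord_field. Qed.
Lemma tcoord_frame s t : tcoord (frame s t) = t. Proof. by coord_field. Qed.

Lemma frame_fcoord x : frame (scoord x) (tcoord x) = x.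
Proof. by case: x => x1 x2; congr pair; coord_field. Qed.

Lemma fcoord_frame s t : fcoord (frame s t) = (s, t).
Proof. by rewrite /fcoord scoord_frame tcoord_frame. Qed.

Lemma fcoord_inj : injective fcoord.
Proof. by move=> x y [sxy txy]; rewrite -(frame_fcoord x) -(frame_fcoord y) sxy txy. Qed.

Lemma fcoord_pcomb r x y : fcoord (pcomb r x y) = pcomb r (fcoord x) (fcoord y).
Proof. by rewrite /fcoord; congr pair; coord_field. Qed.

Lemma scoord_padd x d : scoord (padd x d) = scoord x + slin d.
Proof. by coord_field. Qed.
Lemma tcoord_padd x d : tcoord (padd x d) = tcoord x + tlin d.
Proof. by coord_field. Qed.

Lemma fcoord_padd x d : fcoord (padd x d) = padd (fcoord x) (lin d).
Proof. by rewrite /fcoord scoord_padd tcoord_padd. Qed.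

Lemma frame_pcomb r s1 t1 s2 t2 :
  pcomb r (frame s1 t1) (frame s2 t2) = frame ((1 - r) * s1 + r * s2) ((1 - r) * t1 + r * t2).
Proof. by rewrite /pcomb /frame /padd /pscale /=; congr pair; ring. Qed.

Lemma pcorner_frame k : pcorner v a b k =
  frame (square_corner R k).1 (square_corner R k).2.
Proof.
by case: k => [|[|[|k]]];
  rewrite /= /frame /padd /pscale /= ?mul0r ?mul1r ?addr0 ?add0r //; case: (v).
Qed.

Lemma parallelogramE x :
  parallelogram v a b x <-> 0 <= scoord x <= 1 /\ 0 <= tcoord x <= 1.
Proof.
split; first by case=> s [t [s01 [t01 ->]]]; rewrite -/(frame s t) scoord_frame tcoord_frame.
case=> s01 t01; exists (scoord x), (tcoord x); do 2 split => //.
by rewrite -/(frame _ _) frame_fcoord.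
Qed.

Lemma parallelogram_frame s t :
  0 <= s <= 1 -> 0 <= t <= 1 -> parallelogram v a b (frame s t).
Proof. by move=> s01 t01; exists s, t. Qed.

Lemma parallelogram_convex : convex_set (parallelogram v a b).
Proof.
move=> _ _ r [s1 [t1 [s1_01 [t1_01 ->]]]] [s2 [t2 [s2_01 [t2_01 ->]]]] /andP[r_ge0 r_le1].
rewrite -!/(frame _ _) frame_pcomb; apply: parallelogram_frame.
  by move: s1_01 s2_01 => /andP[? ?] /andP[? ?]; apply/andP; split; nra.
by move: t1_01 t2_01 => /andP[? ?] /andP[? ?]; apply/andP; split; nra.
Qed.

Lemma aff_hull_parallelogram x : aff_hull (parallelogram v a b) x.
Proof.
move=> A affA sPA.
have in0 : 0 <= (0 : R) <= 1 by apply/andP; split; lra.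
have in1 : 0 <= (1 : R) <= 1 by apply/andP; split; lra.
have A00 := sPA _ (parallelogram_frame in0 in0).
have A10 := sPA _ (parallelogram_frame in1 in0).
have A01 := sPA _ (parallelogram_frame in0 in1).
have As := affA _ _ (2 * scoord x) A00 A10.
have At := affA _ _ (2 * tcoord x) A00 A01.
rewrite !frame_pcomb in As At.
(* the midpoint of [frame (2 s) 0] and [frame 0 (2 t)] is [x] *)
have := affA _ _ (1 / 2) As At; rewrite frame_pcomb.
by congr A; rewrite -[RHS]frame_fcoord; congr frame; field.
Qed.

Lemma slinE d :
  slin d = d.1 * (b.2 / (a.1 * b.2 - a.2 * b.1)) + d.2 * (- b.1 / (a.1 * b.2 - a.2 * b.1)).
Proof. by rewrite /slin; field. Qed.
Lemma tlinE d :
  tlin d = d.1 * (- a.2 / (a.1 * b.2 - a.2 * b.1)) + d.2 * (a.1 / (a.1 * b.2 - a.2 * b.1)).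
Proof. by rewrite /tlin; field. Qed.

Lemma relint_parallelogram y : relint (parallelogram v a b) y -> open_square (fcoord y).
Proof.
move=> [_ [e [e_gt0 Pe]]].
have step d : exists2 r : R, 0 < r & parallelogram v a b (padd y (pscale r d)).
  have [r r_gt0 small] := exists_small_scale d e_gt0; exists r => //.
  apply: Pe; first exact: aff_hull_parallelogram.
  by rewrite /padd /pscale /=; move: small; congr (_ ^+ 2 + _ ^+ 2 < _); ring.
have scoord_step r d : scoord (padd y (pscale r d)) = scoord y + r * slin d.
  by rewrite scoord_padd /slin /pscale /=; field.
have tcoord_step r d : tcoord (padd y (pscale r d)) = tcoord y + r * tlin d.
  by rewrite tcoord_padd /tlin /pscale /=; field.
have [r1 r1_gt0 /parallelogramE[+ _]] := step a.
have [r2 r2_gt0 /parallelogramE[+ _]] := step (- a.1, - a.2).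
have [r3 r3_gt0 /parallelogramE[_ +]] := step b.
have [r4 r4_gt0 /parallelogramE[_ +]] := step (- b.1, - b.2).
rewrite !scoord_step !tcoord_step.
have -> : slin a = 1 by rewrite /slin; field.
have -> : slin (- a.1, - a.2) = -1 by rewrite /slin /=; field.
have -> : tlin b = 1 by rewrite /tlin; field.
have -> : tlin (- b.1, - b.2) = -1 by rewrite /tlin /=; field.
move=> /andP[? ?] /andP[? ?] /andP[? ?] /andP[? ?].
by split; apply/andP; split => /=; lra.
Qed.

Lemma box_nbhd_parallelogram y : open_square (fcoord y) ->
  exists2 e : R, 0 < e & box_nbhd (parallelogram v a b) y e.
Proof.
rewrite /open_square /= => -[/andP[s_gt0 s_lt1] /andP[t_gt0 t_lt1]].
set m := Num.min (Num.min (scoord y) (1 - scoord y)) (Num.min (tcoord y) (1 - tcoord y)).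
have m_gt0 : 0 < m by rewrite !lt_min; apply/andP; split; apply/andP; split; lra.
have [ms1 [ms2 [mt1 mt2]]] :
    m <= scoord y /\ m <= 1 - scoord y /\ m <= tcoord y /\ m <= 1 - tcoord y.
  by rewrite /m !ge_min !lexx /= !orbT.
set D := a.1 * b.2 - a.2 * b.1.
set c := `|b.2 / D| + `|- b.1 / D| + `|- a.2 / D| + `|a.1 / D| + 1.
have c_gt0 : 0 < c.
  rewrite /c; have := normr_ge0 (b.2 / D); have := normr_ge0 (- b.1 / D).
  by have := normr_ge0 (- a.2 / D); have := normr_ge0 (a.1 / D); lra.
have mc_ge0 : 0 <= m / c by apply/ltW/divr_gt0.
exists (m / c); first exact: divr_gt0.
move=> d d1 d2; apply/parallelogramE; rewrite scoord_padd tcoord_padd.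
have lin_le (x w : R) : `|d.1 * x + d.2 * w| <= m / c * (`|x| + `|w|).
  apply: le_trans (ler_normD _ _) _; rewrite !normrM mulrDr.
  by apply: lerD; apply: ler_wpM2r => //; apply: normr_ge0.
have mc : m / c * c = m by field; lra.
have : `|slin d| <= m.
  rewrite slinE; apply: le_trans (lin_le _ _) _; rewrite -[X in _ <= X]mc.
  by apply: ler_wpM2l => //; rewrite /c; have := normr_ge0 (- a.2 / D);
     have := normr_ge0 (a.1 / D); lra.
have : `|tlin d| <= m.
  rewrite tlinE; apply: le_trans (lin_le _ _) _; rewrite -[X in _ <= X]mc.
  by apply: ler_wpM2l => //; rewrite /c; have := normr_ge0 (b.2 / D);
     have := normr_ge0 (- b.1 / D); lra.
rewrite !ler_norml => /andP[? ?] /andP[? ?].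
by split; apply/andP; split; lra.
Qed.

Lemma facet_relint_on_facet (i : 'I_4) x : facet_relint v a b i x -> on_facet i (fcoord x).
Proof.
case=> r [/andP[r_gt0 r_lt1] ->]; rewrite fcoord_pcomb !pcorner_frame !fcoord_frame.
rewrite /pcomb /padd /pscale.
by case: i => [[|[|[|[|//]]]] ?] /=; split; rewrite ?mulr0 ?mulr1 ?addr0 ?add0r;
  try ring; apply/andP; split; lra.
Qed.

Lemma parallelogram_or_beyond_facet x :
  parallelogram v a b x \/ exists i : 'I_4, beyond_facet i (fcoord x).
Proof.
have [t_lt0|t_ge0] := ltP (tcoord x) 0; first by right; exists (@Ordinal 4 0 isT).
have [s_gt1|s_le1] := ltP 1 (scoord x); first by right; exists (@Ordinal 4 1 isT).
have [t_gt1|t_le1] := ltP 1 (tcoord x); first by right; exists (@Ordinal 4 2 isT).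
have [s_lt0|s_ge0] := ltP (scoord x) 0; first by right; exists (@Ordinal 4 3 isT).
by left; apply/parallelogramE; rewrite s_ge0 s_le1 t_ge0 t_le1.
Qed.

Lemma box_nbhd_between_facets (i j : 'I_4) c d (r : R) : i != j ->
  facet_relint v a b i c -> facet_relint v a b j d -> 0 < r < 1 ->
  exists2 e : R, 0 < e & box_nbhd (parallelogram v a b) (pcomb r c d) e.
Proof.
move=> neq_ij /facet_relint_on_facet on_c /facet_relint_on_facet on_d r01.
apply: box_nbhd_parallelogram; rewrite fcoord_pcomb.
exact: open_square_pcomb_facets (ltn_ord i) (ltn_ord j) neq_ij on_c on_d r01.
Qed.

Lemma box_nbhd_extension K x c d :
  convex_set K -> parallelogram v a b `<=` K -> K x ->
  extension_in_hull (fcoord c) (fcoord d) (fcoord x) ->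
  exists2 eta : R, 0 < eta < 1 & exists2 e : R, 0 < e & box_nbhd K (pcomb (- eta) c d) e.
Proof.
move=> convK sPK Kx [eta [mu [z [eta01 mu01 open_z ext]]]]; exists eta => //.
have [e0 e0_gt0 Pz] : exists2 e : R, 0 < e & box_nbhd (parallelogram v a b) (frame z.1 z.2) e.
  by apply: box_nbhd_parallelogram; rewrite fcoord_frame; case: (z) open_z.
have mu_lt1 : 0 < 1 - mu by case/andP: mu01 => ? ?; lra.
exists ((1 - mu) * e0); first exact: mulr_gt0.
have -> : pcomb (- eta) c d = pcomb mu (frame z.1 z.2) x.
  by apply: fcoord_inj; rewrite !fcoord_pcomb fcoord_frame -surjective_pairing.
exact: box_nbhd_pcomb (box_nbhd_sub sPK Pz) Kx mu01.
Qed.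

Lemma beyond_facet_not_free K x (i0 i1 i2 i3 : 'I_4) c d c' d' :
  convex_set K -> parallelogram v a b `<=` K -> K x -> beyond_facet i0 (fcoord x) ->
  facet_relint v a b i0 c -> facet_relint v a b i1 d -> i1 != i0 ->
  facet_relint v a b i2 c' -> facet_relint v a b i3 d' -> i2 != i3 ->
  padd c c' = padd d d' -> lattice_triangle c d c' -> ~ R_Delta2_free K.
Proof.
move=> convK sPK Kx beyond_x on_c on_d neq10 on_c' on_d' neq23 cc'_dd' lat.
have [eta eta01 [e0 e0_gt0 K0]] := box_nbhd_extension convK sPK Kx
  (extension_in_hull_facet (ltn_ord i0) (ltn_ord i1) neq10
    (facet_relint_on_facet on_c) (facet_relint_on_facet on_d) beyond_x).
(* the translate by [w] of the triangle [c d c'] is the one inside [K] *)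
set w := (eta * (c.1 - d.1), eta * (c.2 - d.2)).
have cwE : padd c w = pcomb (- eta) c d by rewrite /pcomb /padd /pscale /=; congr pair; ring.
have dwE : padd d w = pcomb eta d c by rewrite /pcomb /padd /pscale /=; congr pair; ring.
have c'wE : padd c' w = pcomb eta c' d'.
  have -> : d' = (c.1 + c'.1 - d.1, c.2 + c'.2 - d.2).
    by move: cc'_dd'; rewrite /padd; case: (d') => ? ? [? ?]; congr pair; lra.
  by rewrite /pcomb /padd /pscale /=; congr pair; ring.
have [e1 e1_gt0 P1] := box_nbhd_between_facets neq10 on_d on_c eta01.
have [e2 e2_gt0 P2] := box_nbhd_between_facets neq23 on_c' on_d' eta01.
set e := Num.min e0 (Num.min e1 e2).
have e_gt0 : 0 < e by rewrite /e !lt_min e0_gt0 e1_gt0 e2_gt0.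
have [le_e0 [le_e1 le_e2]] : e <= e0 /\ e <= e1 /\ e <= e2.
  by rewrite /e !ge_min !lexx /= !orbT.
apply: (lattice_triangle_not_free convK e_gt0 _ _ _ (lattice_triangle_padd w lat)).
- by rewrite cwE; apply: box_nbhd_le le_e0 K0.
- by rewrite dwE; apply: box_nbhd_sub sPK (box_nbhd_le le_e1 P1).
- by rewrite c'wE; apply: box_nbhd_sub sPK (box_nbhd_le le_e2 P2).
Qed.

End FrameCoordinates.

Lemma unimodular_int_comb (m11 m12 m21 m22 n1 n2 : int) : unimodular m11 m12 m21 m22 ->
  exists k l : int, n1 = k * m11 + l * m12 /\ n2 = k * m21 + l * m22.
Proof.
move=> unimod_m; set dm := m11 * m22 - m12 * m21.
have dm2 : dm * dm = 1 by rewrite /dm; case: unimod_m => ->.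
(* Cramer's rule, the inverse determinant being [dm] itself *)
exists (dm * (n1 * m22 - n2 * m12)), (dm * (m11 * n2 - m21 * n1)); split.
  by rewrite -[LHS]mul1r -dm2 /dm; ring.
by rewrite -[LHS]mul1r -dm2 /dm; ring.
Qed.

Lemma det_eq0_of_axes (k1 l1 k2 l2 : int) : k1 = 0 \/ l1 = 0 -> k2 = 0 \/ l2 = 0 ->
  k2 - k1 = 0 \/ l2 - l1 = 0 -> k1 * l2 - k2 * l1 = 0.
Proof. by move=> [->|->] [->|->] [|]; lia. Qed.

Section UnimodularSquare.
Variables (R : realType) (m11 m12 m21 m22 : int) (q : pt R).
Hypothesis unimod_m : unimodular m11 m12 m21 m22.

Definition Qvertex (j : nat) : pt R := umap m11 m12 m21 m22 q (square_corner R j).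

Lemma Qvertex_padd (j : 'I_4) :
  padd (Qvertex j) (Qvertex (ordS (ordS j))) =
  padd (Qvertex (ordS j)) (Qvertex (ordS (ordS (ordS j)))).
Proof. by case: j => [[|[|[|[|//]]]] ?]; rewrite /Qvertex /umap /padd /=; congr pair; ring. Qed.

Lemma Qvertex_lattice_triangle (j : 'I_4) :
  lattice_triangle (Qvertex j) (Qvertex (ordS j)) (Qvertex (ordS (ordS j))).
Proof.
have det_pm (n11 n12 n21 n22 : int) : n11 * n22 - n12 * n21 = m11 * m22 - m12 * m21 \/
    n11 * n22 - n12 * n21 = - (m11 * m22 - m12 * m21) -> unimodular n11 n12 n21 n22.
  by rewrite /unimodular; case: unimod_m => -> [->|->];
    rewrite ?opprK; [left | right | right | left].
rewrite /lattice_triangle /Qvertex /umap /padd.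
case: j => [[|[|[|[|//]]]] ?] /=.
- exists m11, (m11 + m12), m21, (m21 + m22); split; first by apply: det_pm; left; ring.
  by rewrite !rmorphD; split; congr pair; ring.
- exists m12, (m12 - m11), m22, (m22 - m21); split; first by apply: det_pm; left; ring.
  by rewrite !rmorphB; split; congr pair; ring.
- exists (- m11), (- m11 - m12), (- m21), (- m21 - m22); split; first by apply: det_pm; left; ring.
  by rewrite !rmorphB !rmorphN; split; congr pair; ring.
- exists (- m12), (m11 - m12), (- m22), (m21 - m22); split; first by apply: det_pm; left; ring.
  by rewrite !rmorphB !rmorphN; split; congr pair; ring.
Qed.

End UnimodularSquare.

Section InscribedParallelogram.
Variables (R : realType) (v a b : pt R) (m11 m12 m21 m22 : int) (q : pt R).
Hypothesis hab : a.1 * b.2 - a.2 * b.1 != 0.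
Hypothesis unimod_m : unimodular m11 m12 m21 m22.

Local Notation P := (parallelogram v a b).
Local Notation fcoord := (fcoord v a b).
Local Notation Qvertex := (Qvertex m11 m12 m21 m22 q).
Local Notation e1 := (lin a b (m11%:~R, m21%:~R)).
Local Notation e2 := (lin a b (m12%:~R, m22%:~R)).

Definition lattice_vec (k l : int) : pt R := ((k * m11 + l * m12)%:~R, (k * m21 + l * m22)%:~R).

Lemma lattice_edge_axis y y' (k l : int) : inscribed_edges e1 e2 ->
  open_square (fcoord y) -> open_square (fcoord y') -> y' = padd y (lattice_vec k l) ->
  k = 0 \/ l = 0.
Proof.
move=> ins [/= /andP[? ?] /andP[? ?]] open_y' y'E.
move: open_y'; rewrite y'E (fcoord_padd v hab) => -[/= /andP[? ?] /andP[? ?]].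
apply: (inscribed_edges_int_axis ins); rewrite ltr_norml.
  have -> : k%:~R * e1.1 + l%:~R * e2.1 = slin a b (lattice_vec k l).
    by rewrite /lin /slin /lattice_vec /= !rmorphD !rmorphM; field.
  by apply/andP; split; lra.
have -> : k%:~R * e1.2 + l%:~R * e2.2 = tlin a b (lattice_vec k l).
  by rewrite /lin /tlin /lattice_vec /= !rmorphD !rmorphM; field.
by apply/andP; split; lra.
Qed.

Lemma R_Delta2_free_inscribed : inscribed_edges e1 e2 -> R_Delta2_free P.
Proof.
move=> ins; split; first exact: parallelogram_convex.
case=> n11 [n12 [n21 [n22 [b0 [unimod_n sub]]]]].
have open_vertex (z : pt R) : Delta2 z -> open_square (fcoord (umap n11 n12 n21 n22 b0 z)).
  by move=> Dz; apply: (relint_parallelogram hab); apply: sub; exists z.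
have D00 : Delta2 ((0, 0) : pt R) by rewrite /Delta2 /=; lra.
have D10 : Delta2 ((1, 0) : pt R) by rewrite /Delta2 /=; lra.
have D01 : Delta2 ((0, 1) : pt R) by rewrite /Delta2 /=; lra.
have [k1 [l1 [n11E n21E]]] := unimodular_int_comb n11 n21 unimod_m.
have [k2 [l2 [n12E n22E]]] := unimodular_int_comb n12 n22 unimod_m.
have edge (z z' : pt R) (k l : int) : Delta2 z -> Delta2 z' ->
    umap n11 n12 n21 n22 b0 z' = padd (umap n11 n12 n21 n22 b0 z) (lattice_vec k l) ->
    k = 0 \/ l = 0.
  by move=> Dz Dz'; apply: lattice_edge_axis ins (open_vertex _ Dz) (open_vertex _ Dz').
have ax1 : k1 = 0 \/ l1 = 0.
  apply: (edge _ _ _ _ D00 D10).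
  by rewrite /umap /lattice_vec /padd -n11E -n21E /=; congr pair; ring.
have ax2 : k2 = 0 \/ l2 = 0.
  apply: (edge _ _ _ _ D00 D01).
  by rewrite /umap /lattice_vec /padd -n12E -n22E /=; congr pair; ring.
have ax12 : k2 - k1 = 0 \/ l2 - l1 = 0.
  apply: (edge _ _ _ _ D10 D01); rewrite /lattice_vec.
  have -> : (k2 - k1) * m11 + (l2 - l1) * m12 = n12 - n11 by rewrite n12E n11E; ring.
  have -> : (k2 - k1) * m21 + (l2 - l1) * m22 = n22 - n21 by rewrite n22E n21E; ring.
  by rewrite /umap /padd !rmorphB /=; congr pair; ring.
have det_n : n11 * n22 - n12 * n21 = (k1 * l2 - k2 * l1) * (m11 * m22 - m12 * m21).
  by rewrite n11E n21E n12E n22E; ring.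
by move: unimod_n; rewrite /unimodular det_n det_eq0_of_axes // mul0r; lia.
Qed.

Lemma fcoord_Qvertex j : fcoord (Qvertex j) = pcorner (fcoord q) e1 e2 j.
Proof.
by case: j => [|[|[|j]]]; rewrite /= /fcoord /lin /scoord /tcoord /slin /tlin /umap /padd /=;
  congr pair; field.
Qed.

Lemma inscribed_edges_Qvertex (sigma : 'I_4 -> 'I_4) : injective sigma ->
  (forall i : 'I_4, facet_relint v a b i (Qvertex (sigma i))) -> inscribed_edges e1 e2.
Proof.
move=> inj_sigma on_sigma.
have on_facet_sigma (i : 'I_4) : on_facet i (pcorner (fcoord q) e1 e2 (sigma i)).
  by rewrite -fcoord_Qvertex; apply: facet_relint_on_facet.
pose o k (lt_k4 : (k < 4)%N) : 'I_4 := Ordinal lt_k4.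
have uniq_sigma : uniq [seq nat_of_ord (sigma i) | i <- [:: o 0 isT; o 1 isT; o 2 isT; o 3 isT]].
  by rewrite /= !inE !(inj_eq (@ord_inj 4)) !(inj_eq inj_sigma).
exact: inscribed_edges_of_facets (ltn_ord _) (ltn_ord _) (ltn_ord _) (ltn_ord _) uniq_sigma
  (on_facet_sigma (o 0 isT)) (on_facet_sigma (o 1 isT)) (on_facet_sigma (o 2 isT))
  (on_facet_sigma (o 3 isT)).
Qed.

Lemma parallelogram_maximal (sigma : 'I_4 -> 'I_4) : injective sigma ->
  (forall i : 'I_4, facet_relint v a b i (Qvertex (sigma i))) ->
  forall K, R_Delta2_free K -> P `<=` K -> K `<=` P.
Proof.
move=> inj_sigma on_sigma K freeK sPK x Kx.
have [//|[i0 beyond_x]] := parallelogram_or_beyond_facet v hab x; exfalso.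
have [phi _ phiK] := injF_bij inj_sigma.
have on_phi j : facet_relint v a b (phi j) (Qvertex j) by rewrite -{2}(phiK j).
have ordS_neq (k : 'I_4) : ordS k != k by case: k => [[|[|[|[|//]]]] ?].
set j := sigma i0.
apply: (beyond_facet_not_free hab freeK.1 sPK Kx beyond_x (on_sigma i0) (on_phi (ordS j))
  _ (on_phi (ordS (ordS j))) (on_phi (ordS (ordS (ordS j))))) freeK.
- by rewrite -(inj_eq inj_sigma) phiK ordS_neq.
- by rewrite (inj_eq (can_inj phiK)) !(inj_eq (@ordS_inj 4)) eq_sym ordS_neq.
- exact: Qvertex_padd.
- exact: Qvertex_lattice_triangle.
Qed.

End InscribedParallelogram.

Theorem proposition5p9 (R : realType)
  (m11 m12 m21 m22 : int) (q : pt R) (v a b : pt R) :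
  unimodular m11 m12 m21 m22 ->
  a.1 * b.2 - a.2 * b.1 != 0 ->
  (exists sigma : 'I_4 -> 'I_4, injective sigma /\
     forall (i j : 'I_4),
       facet_relint v a b i (umap m11 m12 m21 m22 q (square_corner R j)) <->
       j = sigma i) ->
  max_R_Delta2_free (parallelogram v a b).
Proof.
move=> unimod_m hab [sigma [inj_sigma facet_sigma]].
have on_sigma (i : 'I_4) : facet_relint v a b i (Qvertex m11 m12 m21 m22 q (sigma i)).
  exact/facet_sigma.
split.
  apply: (R_Delta2_free_inscribed v hab unimod_m).
  exact: (inscribed_edges_Qvertex hab inj_sigma on_sigma).
move=> K freeK sPK; apply/seteqP; split => //.
exact: (parallelogram_maximal hab unimod_m inj_sigma on_sigma freeK sPK).
Qed.
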